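(* Let $T>0$ and let $\alpha,\beta:\mathbb{R}\to\mathbb{R}$ be continuous $T$-periodic functions such that $\alpha=0$ on $[\tfrac T2,T]$, $\beta=0$ on $[0,\tfrac T2]$, $\alpha>0$ on $(0,\tfrac T2)$, $\beta>0$ on $(\tfrac T2,T)$, and $\int_0^T\alpha=\int_0^T\beta=:A>0$. For $x\in\mathbb{R}$ define $E_0(x):=1$, $E_1(x):=e^{(1-x)A}$ and, for $n\ge2$, \[ E_n(x):=\begin{cases} \exp\!\Big(\big[x(E_1(x)+E_3(x)+\cdots+E_{n-1}(x))-\tfrac n2\big]A\Big), & n \text{ even},\\[4pt] \exp\!\Big(\big[\tfrac{n+1}{2}-x(E_0(x)+E_2(x)+\cdots+E_{n-1}(x))\big]A\Big), & n\text{ odd}.\end{cases} \] Then for every integer $n\ge1$ and every $x>0$, \[ \mathcal{P}_n(x,x)=\big(xE_{2n-1}(x),\,xE_{2n}(x)\big). \]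
   Context: $\mathcal{P}_n(u_0,v_0):=(u(nT),v(nT))$, where $(u,v)$ is the solution of $u'=\alpha(t)u(1-v)$, $v'=\beta(t)v(-1+u)$ with $(u(0),v(0))=(u_0,v_0)$ (the $nT$-time Poincaré map). *)

From Stdlib Require Import Reals List Arith.
From Coquelicot Require Import Coquelicot.
Import ListNotations.
Open Scope R_scope.

Definition sum_idx (P : nat -> bool) (l : list R) : R :=
  fold_right Rplus 0
    (map (fun i => if P i then nth i l 0 else 0) (seq 0 (length l))).

(* Given l = [E_0; ...; E_{n-1}], compute E_n (n >= 1). *)
Definition E_next (A x : R) (l : list R) (n : nat) : R :=
  if Nat.eqb n 1 then exp ((1 - x) * A)
  else if Nat.even n then
    exp ((x * sum_idx Nat.odd l - INR n / 2) * A)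
  else
    exp ((INR (n + 1) / 2 - x * sum_idx Nat.even l) * A).

Fixpoint E_list (A x : R) (n : nat) : list R :=
  match n with
  | O => [1]
  | S m => let l := E_list A x m in l ++ [E_next A x l (S m)]
  end.

Definition E (A : R) (n : nat) (x : R) : R := nth n (E_list A x n) 0.

Definition is_LV_solution (alpha beta : R -> R) (u0 v0 : R) (u v : R -> R) : Prop :=
  u 0 = u0 /\ v 0 = v0 /\
  (forall t, is_derive u t (alpha t * u t * (1 - v t))) /\
  (forall t, is_derive v t (beta t * v t * (-1 + u t))).

(* On each period [kT, kT + T] the two coefficients act one at a time: on the
   first half beta = 0, so v is frozen and u solves the linear equation
   u' = (1 - v) alpha u; on the second half alpha = 0 and the roles swap.  One
   period therefore maps (u, v) to (u', v e^((u' - 1) A)) with u' = u e^((1 - v) A),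
   and starting from (x, x) the recursion defining E_n is exactly the coordinate
   form of iterating this map:
     E_(2n+1) = E_(2n-1) e^((1 - x E_(2n)) A),  E_(2n+2) = E_(2n) e^((x E_(2n+1) - 1) A).
   A solution on all of R is obtained by running the same closed formulas on every
   period, backwards through the inverse period map for negative times, and gluing
   them at the multiples of T, where both coefficients vanish. *)

From Stdlib Require Import Reals Lra Lia ZArith List.
From Coquelicot Require Import Coquelicot.
Import ListNotations.
Open Scope R_scope.

Lemma null_derivative_eq (f : R -> R) (a b : R) :
  a <= b -> (forall t, a <= t <= b -> is_derive f t 0) -> f b = f a.
Proof.
  intros Hab Hf.
  destruct (MVT_abs f (fun _ => 0) a b) as [c [Hc _]].
  - intros c Hc. apply is_derive_Reals, Hf.
    rewrite Rmin_left, Rmax_right in Hc by lra. exact Hc.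
  - rewrite Rabs_R0, Rmult_0_l in Hc. apply Rabs_eq_0 in Hc. lra.
Qed.

Lemma RInt_null (f : R -> R) (a b : R) :
  a <= b -> (forall t, a <= t <= b -> f t = 0) -> RInt f a b = 0.
Proof.
  intros Hab Hf. rewrite (RInt_ext f (fun _ => 0)).
  - rewrite RInt_const. apply Rmult_0_r.
  - rewrite Rmin_left, Rmax_right by lra. intros t Ht. apply Hf. lra.
Qed.

Lemma linear_ode_exp_RInt (p y : R -> R) (a b : R) :
  (forall t, continuous p t) -> a <= b ->
  (forall t, a <= t <= b -> is_derive y t (p t * y t)) ->
  y b = y a * exp (RInt p a b).
Proof.
  intros Hp Hab Hy.
  assert (Hw : y b * exp (- RInt p a b) = y a * exp (- RInt p a a)).
  { apply (null_derivative_eq (fun t => y t * exp (- RInt p a t))); [exact Hab|].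
    intros t Ht.
    assert (Dy := Hy t Ht). auto_derive.
    - split; [exists (p t * y t); exact Dy|].
      split; [apply (ex_RInt_continuous (V := R_CompleteNormedModule)); auto|].
      split; [|exact I]. apply filter_forall. intros s. apply continuity_pt_filterlim, Hp.
    - replace (Derive (fun x : R => y x) t) with (p t * y t)
        by (symmetry; apply is_derive_unique, Dy).
      ring. }
  replace (RInt p a a) with 0 in Hw by (rewrite RInt_point; reflexivity).
  rewrite Ropp_0, exp_0, Rmult_1_r in Hw.
  rewrite <- Hw, Rmult_assoc, <- exp_plus, Rplus_opp_l, exp_0. ring.
Qed.

Lemma is_derive_glue (f g h : R -> R) (c d l : R) : 0 < d ->
  (forall s, c - d < s < c -> f s = g s) ->
  (forall s, c <= s < c + d -> f s = h s) -> g c = h c ->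
  is_derive g c l -> is_derive h c l -> is_derive f c l.
Proof.
  intros Hd Hl Hr Hgh Dg Dh.
  apply is_derive_Reals in Dg, Dh. apply is_derive_Reals. intros eps Heps.
  destruct (Dg eps Heps) as [dg Hg]. destruct (Dh eps Heps) as [dh Hh].
  assert (Hpos : 0 < Rmin d (Rmin dg dh)).
  { destruct dg, dh; simpl. repeat apply Rmin_pos; auto. }
  exists (mkposreal _ Hpos). intros e He0 He. simpl in He.
  assert (Hd' := Rmin_l d (Rmin dg dh)). assert (Hdg := Rmin_l dg dh).
  assert (Hdh := Rmin_r dg dh). assert (Hm := Rmin_r d (Rmin dg dh)).
  assert (Hfc : f c = h c) by (apply Hr; lra).
  apply Rabs_def2 in He.
  destruct (Rlt_or_le e 0) as [Hneg|Hnneg].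
  - rewrite (Hl (c + e)), Hfc, <- Hgh by lra. apply Hg; auto. apply Rabs_def1; lra.
  - rewrite (Hr (c + e)), Hfc by lra. apply Hh; auto. apply Rabs_def1; lra.
Qed.

Lemma periodic_IZR (f : R -> R) (T : R) :
  (forall t, f (t + T) = f t) -> forall k t, f (t + IZR k * T) = f t.
Proof.
  intros Hf k. induction k as [|k IH|k IH] using Z.peano_ind; intros t.
  - rewrite Rmult_0_l, Rplus_0_r. reflexivity.
  - rewrite succ_IZR, <- (IH t), <- (Hf (t + IZR k * T)). f_equal. ring.
  - rewrite <- Z.sub_1_r, minus_IZR, <- (IH t), <- (Hf (t + (IZR k - 1) * T)).
    f_equal. ring.
Qed.

Lemma RInt_periodic_shift (f : R -> R) (T a b : R) (k : Z) :
  (forall t, continuous f t) -> (forall t, f (t + T) = f t) ->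
  RInt f (a + IZR k * T) (b + IZR k * T) = RInt f a b.
Proof.
  intros Hc Hp.
  assert (Hl := RInt_comp_lin f 1 (IZR k * T) a b).
  rewrite !Rmult_1_l in Hl. rewrite <- Hl.
  - apply RInt_ext. intros t _. change (1 * f (1 * t + IZR k * T) = f t).
    rewrite !Rmult_1_l. apply periodic_IZR, Hp.
  - apply ex_RInt_continuous. auto.
Qed.

Definition period_piece (T : R) (G : Z -> R -> R) (t : R) : R := G (Zfloor (t / T)) t.

Lemma Zfloor_div_eq (T t : R) (k : Z) :
  0 < T -> IZR k * T <= t < IZR k * T + T -> Zfloor (t / T) = k.
Proof.
  intros HT Ht. apply Zfloor_eq.
  assert (Hdiv : t / T * T = t) by (field; lra).
  split.
  - apply (Rmult_le_reg_r T); lra.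
  - apply (Rmult_lt_reg_r T); lra.
Qed.

Lemma Zfloor_div_bound (T t : R) :
  0 < T -> IZR (Zfloor (t / T)) * T <= t < IZR (Zfloor (t / T)) * T + T.
Proof.
  intros HT. destruct (Zfloor_bound (t / T)) as [Hlo Hhi].
  assert (Hdiv : t / T * T = t) by (field; lra).
  split.
  - rewrite <- Hdiv at 2. apply Rmult_le_compat_r; lra.
  - rewrite <- Hdiv at 1.
    replace (IZR (Zfloor (t / T)) * T + T) with ((IZR (Zfloor (t / T)) + 1) * T) by ring.
    apply Rmult_lt_compat_r; lra.
Qed.

Lemma period_piece_eq (T : R) (G : Z -> R -> R) (k : Z) (t : R) :
  0 < T -> IZR k * T <= t < IZR k * T + T -> period_piece T G t = G k t.
Proof. intros HT Ht. unfold period_piece. rewrite (Zfloor_div_eq T t k); auto. Qed.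

Lemma is_derive_period_piece (T : R) (G dG : Z -> R -> R) : 0 < T ->
  (forall k t, is_derive (G k) t (dG k t)) ->
  (forall k, G k (IZR k * T + T) = G (k + 1)%Z (IZR k * T + T)) ->
  (forall k, dG k (IZR k * T + T) = dG (k + 1)%Z (IZR k * T + T)) ->
  forall t, is_derive (period_piece T G) t (period_piece T dG t).
Proof.
  intros HT HG HGk HdGk t.
  set (k := Zfloor (t / T)).
  assert (Hk : IZR k * T <= t < IZR k * T + T) by apply Zfloor_div_bound, HT.
  rewrite (period_piece_eq T dG k t) by auto.
  destruct (Req_dec t (IZR k * T)) as [Ht|Ht].
  - assert (Hj : IZR (k - 1) * T + T = IZR k * T) by (rewrite minus_IZR; ring).
    rewrite Ht.
    apply (is_derive_glue _ (G (k - 1)%Z) (G k) (IZR k * T) T); auto.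
    + intros s Hs. apply period_piece_eq; lra.
    + intros s Hs. apply period_piece_eq; lra.
    + rewrite <- Hj, HGk. f_equal. ring.
    + replace (dG k (IZR k * T)) with (dG (k - 1)%Z (IZR k * T)); [apply HG|].
      rewrite <- Hj, HdGk. f_equal. ring.
  - apply (is_derive_ext_loc (G k)); [|apply HG].
    apply (locally_interval _ t (IZR k * T) (IZR k * T + T)); simpl; try lra.
    intros s Hs1 Hs2. symmetry. apply period_piece_eq; lra.
Qed.

Lemma is_derive_exp_RInt (f : R -> R) (a C K t : R) :
  (forall s, continuous f s) ->
  is_derive (fun s => C * exp (K * RInt f a s)) t (C * exp (K * RInt f a t) * (K * f t)).
Proof.
  intros Hf. auto_derive.
  - split; [apply (ex_RInt_continuous (V := R_CompleteNormedModule)); auto|].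
    split; [|exact I]. apply filter_forall. intros s. apply continuity_pt_filterlim, Hf.
  - change (fun x : R => f x) with f. ring.
Qed.

Definition Z_orbit {X : Type} (f g : X -> X) (x0 : X) (k : Z) : X :=
  match k with
  | Z0 => x0
  | Zpos p => Nat.iter (Pos.to_nat p) f x0
  | Zneg p => Nat.iter (Pos.to_nat p) g x0
  end.

Lemma Z_orbit_succ {X : Type} (f g : X -> X) (x0 : X) (k : Z) :
  (forall x, f (g x) = x) -> Z_orbit f g x0 (k + 1) = f (Z_orbit f g x0 k).
Proof.
  intros Hfg. destruct k as [|p|p].
  - reflexivity.
  - simpl. rewrite Pos2Nat.inj_add, Nat.add_1_r. reflexivity.
  - induction p as [|p _] using Pos.peano_ind.
    + simpl. rewrite Hfg. reflexivity.
    + replace (Z.neg (Pos.succ p) + 1)%Z with (Z.neg p) by lia.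
      simpl. rewrite Pos2Nat.inj_succ. simpl. rewrite Hfg. reflexivity.
Qed.

Definition lv_period_map (A : R) (p : R * R) : R * R :=
  let u1 := fst p * exp ((1 - snd p) * A) in (u1, snd p * exp ((u1 - 1) * A)).

Definition lv_period_map_inv (A : R) (p : R * R) : R * R :=
  let v0 := snd p * exp ((1 - fst p) * A) in (fst p * exp ((v0 - 1) * A), v0).

Lemma lv_period_map_invK (A : R) (p : R * R) : lv_period_map A (lv_period_map_inv A p) = p.
Proof.
  destruct p as [a b]. unfold lv_period_map, lv_period_map_inv; simpl.
  rewrite !Rmult_assoc, <- !exp_plus.
  replace ((b * exp ((1 - a) * A) - 1) * A + (1 - b * exp ((1 - a) * A)) * A) with 0 by ring.
  replace ((1 - a) * A + (a * exp 0 - 1) * A) with 0 by (rewrite exp_0; ring).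
  rewrite exp_0, !Rmult_1_r. reflexivity.
Qed.

Section Periodic_LV.

Variables (T A : R) (alpha beta : R -> R).
Hypothesis T_gt0 : 0 < T.
Hypothesis alpha_cont : forall t, continuous alpha t.
Hypothesis beta_cont : forall t, continuous beta t.
Hypothesis alpha_periodic : forall t, alpha (t + T) = alpha t.
Hypothesis beta_periodic : forall t, beta (t + T) = beta t.
Hypothesis alpha_second_half : forall t, T / 2 <= t <= T -> alpha t = 0.
Hypothesis beta_first_half : forall t, 0 <= t <= T / 2 -> beta t = 0.
Hypothesis RInt_alpha : RInt alpha 0 T = A.
Hypothesis RInt_beta : RInt beta 0 T = A.

Lemma alpha_vanishes (k : Z) (t : R) :
  IZR k * T + T / 2 <= t <= IZR k * T + T -> alpha t = 0.
Proof.
  intros Ht. replace t with (t - IZR k * T + IZR k * T) by ring.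
  rewrite (periodic_IZR alpha T alpha_periodic). apply alpha_second_half. lra.
Qed.

Lemma beta_vanishes (k : Z) (t : R) :
  IZR k * T <= t <= IZR k * T + T / 2 -> beta t = 0.
Proof.
  intros Ht. replace t with (t - IZR k * T + IZR k * T) by ring.
  rewrite (periodic_IZR beta T beta_periodic). apply beta_first_half. lra.
Qed.

Lemma RInt_alpha_period (k : Z) : RInt alpha (IZR k * T) (IZR k * T + T) = A.
Proof.
  rewrite <- RInt_alpha, <- (RInt_periodic_shift alpha T 0 T k); auto.
  f_equal; ring.
Qed.

Lemma RInt_beta_period (k : Z) : RInt beta (IZR k * T) (IZR k * T + T) = A.
Proof.
  rewrite <- RInt_beta, <- (RInt_periodic_shift beta T 0 T k); auto.
  f_equal; ring.
Qed.

Lemma RInt_alpha_to_second_half (k : Z) (t : R) :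
  IZR k * T + T / 2 <= t <= IZR k * T + T -> RInt alpha (IZR k * T) t = A.
Proof.
  intros Ht.
  rewrite <- (RInt_alpha_period k), <- (RInt_Chasles alpha (IZR k * T) t (IZR k * T + T)).
  - rewrite (RInt_null alpha t (IZR k * T + T)); [symmetry; apply Rplus_0_r|lra|].
    intros s Hs. apply (alpha_vanishes k). lra.
  - apply ex_RInt_continuous. auto.
  - apply ex_RInt_continuous. auto.
Qed.

Lemma RInt_beta_to_first_half (k : Z) (t : R) :
  IZR k * T <= t <= IZR k * T + T / 2 -> RInt beta (IZR k * T) t = 0.
Proof.
  intros Ht. apply RInt_null; [lra|]. intros s Hs. apply (beta_vanishes k). lra.
Qed.

Lemma RInt_beta_from_first_half (k : Z) (t : R) :
  IZR k * T <= t <= IZR k * T + T / 2 -> RInt beta t (IZR k * T + T) = A.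
Proof.
  intros Ht.
  rewrite <- (RInt_beta_period k), <- (RInt_Chasles beta (IZR k * T) t (IZR k * T + T)).
  - rewrite (RInt_beta_to_first_half k t Ht). symmetry. apply Rplus_0_l.
  - apply ex_RInt_continuous. auto.
  - apply ex_RInt_continuous. auto.
Qed.

Section Solution.

Variables u v : R -> R.
Hypothesis u_deriv : forall t, is_derive u t (alpha t * u t * (1 - v t)).
Hypothesis v_deriv : forall t, is_derive v t (beta t * v t * (-1 + u t)).

Lemma LV_period_step (k : Z) :
  (u (IZR k * T + T), v (IZR k * T + T)) = lv_period_map A (u (IZR k * T), v (IZR k * T)).
Proof.
  set (c := IZR k * T). set (m := c + T / 2).
  assert (Hv_const : forall s, c <= s <= m -> v s = v c).
  { intros s Hs. apply null_derivative_eq; [lra|]. intros t Ht.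
    replace 0 with (beta t * v t * (-1 + u t)); [apply v_deriv|].
    rewrite (beta_vanishes k t) by (unfold m, c in *; lra). ring. }
  assert (Hu_const : forall s, m <= s <= c + T -> u s = u m).
  { intros s Hs. apply null_derivative_eq; [lra|]. intros t Ht.
    replace 0 with (alpha t * u t * (1 - v t)); [apply u_deriv|].
    rewrite (alpha_vanishes k t) by (unfold m, c in *; lra). ring. }
  assert (Hu_m : u m = u c * exp ((1 - v c) * A)).
  { rewrite <- (RInt_alpha_to_second_half k m) by (unfold m, c; lra). fold c.
    replace ((1 - v c) * RInt alpha c m) with (RInt (fun t => (1 - v c) * alpha t) c m)
      by (apply (RInt_scal alpha), ex_RInt_continuous; auto).
    apply (linear_ode_exp_RInt (fun t => (1 - v c) * alpha t)); [|unfold m; lra|].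
    - intros t. apply (continuous_mult (fun _ => _) alpha); [apply continuous_const|auto].
    - intros t Ht. rewrite <- (Hv_const t Ht) at 1.
      replace ((1 - v t) * alpha t * u t) with (alpha t * u t * (1 - v t)) by ring.
      apply u_deriv. }
  assert (Hv_end : v (c + T) = v c * exp ((u m - 1) * A)).
  { rewrite <- (Hv_const m), <- (RInt_beta_from_first_half k m) by (unfold m, c; lra). fold c.
    replace ((u m - 1) * RInt beta m (c + T))
      with (RInt (fun t => (u m - 1) * beta t) m (c + T))
      by (apply (RInt_scal beta), ex_RInt_continuous; auto).
    apply (linear_ode_exp_RInt (fun t => (u m - 1) * beta t)); [|unfold m; lra|].
    - intros t. apply (continuous_mult (fun _ => _) beta); [apply continuous_const|auto].
    - intros t Ht. rewrite <- (Hu_const t Ht) at 1.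
      replace ((u t - 1) * beta t * v t) with (beta t * v t * (-1 + u t)) by ring.
      apply v_deriv. }
  unfold lv_period_map; simpl. rewrite Hu_const, <- Hu_m by (unfold m; lra).
  rewrite Hv_end. reflexivity.
Qed.

Lemma LV_solution_iter (n : nat) :
  (u (INR n * T), v (INR n * T)) = Nat.iter n (lv_period_map A) (u 0, v 0).
Proof.
  induction n as [|n IH].
  - simpl. rewrite Rmult_0_l. reflexivity.
  - rewrite S_INR, Rmult_plus_distr_r, Rmult_1_l. simpl Nat.iter. rewrite <- IH.
    rewrite INR_IZR_INZ. apply LV_period_step.
Qed.

End Solution.

Section Orbit_Pieces.

Variable z : Z -> R * R.
Hypothesis z_succ : forall k, z (k + 1)%Z = lv_period_map A (z k).

Definition lv_u_piece (k : Z) (t : R) : R :=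
  fst (z k) * exp ((1 - snd (z k)) * RInt alpha (IZR k * T) t).

Definition lv_v_piece (k : Z) (t : R) : R :=
  snd (z k) * exp ((fst (z (k + 1)%Z) - 1) * RInt beta (IZR k * T) t).

Lemma lv_pieces_start (k : Z) :
  lv_u_piece k (IZR k * T) = fst (z k) /\ lv_v_piece k (IZR k * T) = snd (z k).
Proof.
  unfold lv_u_piece, lv_v_piece. rewrite RInt_point, RInt_point.
  change (zero : R) with 0. rewrite !Rmult_0_r, exp_0, !Rmult_1_r. split; reflexivity.
Qed.

Lemma lv_pieces_end (k : Z) :
  lv_u_piece k (IZR k * T + T) = fst (z (k + 1)%Z) /\
  lv_v_piece k (IZR k * T + T) = snd (z (k + 1)%Z).
Proof.
  unfold lv_u_piece, lv_v_piece. rewrite RInt_alpha_period, RInt_beta_period, !z_succ.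
  split; reflexivity.
Qed.

Lemma lv_u_piece_ode (k : Z) (t : R) : IZR k * T <= t <= IZR k * T + T ->
  lv_u_piece k t * ((1 - snd (z k)) * alpha t) =
  alpha t * lv_u_piece k t * (1 - lv_v_piece k t).
Proof.
  intros Ht. unfold lv_v_piece.
  destruct (Rle_lt_dec t (IZR k * T + T / 2)) as [Hhalf|Hhalf].
  - rewrite (RInt_beta_to_first_half k t) by lra. rewrite Rmult_0_r, exp_0. ring.
  - rewrite (alpha_vanishes k t) by lra. ring.
Qed.

Lemma lv_v_piece_ode (k : Z) (t : R) : IZR k * T <= t <= IZR k * T + T ->
  lv_v_piece k t * ((fst (z (k + 1)%Z) - 1) * beta t) =
  beta t * lv_v_piece k t * (-1 + lv_u_piece k t).
Proof.
  intros Ht. unfold lv_u_piece.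
  destruct (Rle_lt_dec t (IZR k * T + T / 2)) as [Hhalf|Hhalf].
  - rewrite (beta_vanishes k t) by lra. ring.
  - rewrite (RInt_alpha_to_second_half k t), z_succ by lra. simpl. ring.
Qed.

End Orbit_Pieces.

Lemma LV_solution_exists (x0 y0 : R) : exists u v, is_LV_solution alpha beta x0 y0 u v.
Proof.
  set (z := Z_orbit (lv_period_map A) (lv_period_map_inv A) (x0, y0)).
  assert (Hz : forall k, z (k + 1)%Z = lv_period_map A (z k))
    by (intros k; apply Z_orbit_succ, lv_period_map_invK).
  assert (Hnext : forall k, IZR k * T + T = IZR (k + 1) * T)
    by (intros k; rewrite plus_IZR; ring).
  assert (Hpiece : forall t, IZR (Zfloor (t / T)) * T <= t <= IZR (Zfloor (t / T)) * T + T).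
  { intros t. destruct (Zfloor_div_bound T t T_gt0). lra. }
  exists (period_piece T (lv_u_piece z)), (period_piece T (lv_v_piece z)).
  split; [|split; [|split]].
  - rewrite (period_piece_eq T _ 0) by (simpl; lra).
    destruct (lv_pieces_start z 0) as [H0 _]. rewrite Rmult_0_l in H0. exact H0.
  - rewrite (period_piece_eq T _ 0) by (simpl; lra).
    destruct (lv_pieces_start z 0) as [_ H0]. rewrite Rmult_0_l in H0. exact H0.
  - intros t.
    replace (alpha t * _ * _)
      with (period_piece T (fun k s => lv_u_piece z k s * ((1 - snd (z k)) * alpha s)) t)
      by (apply lv_u_piece_ode, Hpiece).
    apply is_derive_period_piece; auto.
    + intros k s. apply is_derive_exp_RInt, alpha_cont.
    + intros k. rewrite (proj1 (lv_pieces_end z Hz k)), Hnext.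
      symmetry. apply lv_pieces_start.
    + intros k. rewrite (alpha_vanishes k) by lra. ring.
  - intros t.
    replace (beta t * _ * _)
      with (period_piece T (fun k s => lv_v_piece z k s * ((fst (z (k + 1)%Z) - 1) * beta s)) t)
      by (apply lv_v_piece_ode, Hpiece; exact Hz).
    apply is_derive_period_piece; auto.
    + intros k s. apply is_derive_exp_RInt, beta_cont.
    + intros k. rewrite (proj2 (lv_pieces_end z Hz k)), Hnext.
      symmetry. apply lv_pieces_start.
    + intros k. rewrite beta_periodic, (beta_vanishes k) by lra. ring.
Qed.

End Periodic_LV.

Lemma length_E_list (A x : R) (m : nat) : length (E_list A x m) = S m.
Proof. induction m as [|m IH]; simpl; auto. rewrite length_app, IH. simpl. lia. Qed.

Lemma E_succ (A x : R) (m : nat) : E A (S m) x = E_next A x (E_list A x m) (S m).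
Proof.
  unfold E at 1. simpl. rewrite app_nth2 by (rewrite length_E_list; lia).
  rewrite length_E_list, Nat.sub_diag. reflexivity.
Qed.

Lemma fold_right_Rplus_init (l : list R) (c : R) :
  fold_right Rplus c l = fold_right Rplus 0 l + c.
Proof. induction l as [|a l IH]; simpl; [ring|rewrite IH; ring]. Qed.

Lemma sum_idx_snoc (P : nat -> bool) (l : list R) (a : R) :
  sum_idx P (l ++ [a]) = sum_idx P l + (if P (length l) then a else 0).
Proof.
  unfold sum_idx. rewrite length_app, Nat.add_1_r, seq_S, map_app, fold_right_app. simpl.
  rewrite app_nth2, Nat.sub_diag by lia. simpl.
  rewrite fold_right_Rplus_init, Rplus_0_r. f_equal. f_equal.
  apply map_ext_in. intros i Hi. apply in_seq in Hi.
  rewrite app_nth1 by lia. reflexivity.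
Qed.

Lemma sum_idx_E_list_succ (P : nat -> bool) (A x : R) (m : nat) :
  sum_idx P (E_list A x (S m)) =
  sum_idx P (E_list A x m) + (if P (S m) then E A (S m) x else 0).
Proof.
  simpl (E_list A x (S m)). rewrite sum_idx_snoc, length_E_list, <- E_succ. reflexivity.
Qed.

Lemma E_odd (A x : R) (n : nat) :
  E A (2 * n + 1) x = exp ((INR (n + 1) - x * sum_idx Nat.even (E_list A x (2 * n))) * A).
Proof.
  rewrite Nat.add_1_r, E_succ. unfold E_next. destruct n as [|n].
  - unfold sum_idx. simpl. f_equal. ring.
  - replace (Nat.eqb (S (2 * S n)) 1) with false by (symmetry; apply Nat.eqb_neq; lia).
    replace (Nat.even (S (2 * S n))) with false
      by (rewrite Nat.even_succ, Nat.odd_mul; reflexivity).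
    replace (INR (S (2 * S n) + 1) / 2) with (INR (S n + 1)).
    + reflexivity.
    + replace (S (2 * S n) + 1)%nat with (2 * (S n + 1))%nat by lia.
      rewrite mult_INR. simpl (INR 2). field.
Qed.

Lemma E_even (A x : R) (n : nat) :
  E A (2 * n + 2) x = exp ((x * sum_idx Nat.odd (E_list A x (2 * n + 1)) - INR (n + 1)) * A).
Proof.
  replace (2 * n + 2)%nat with (S (2 * n + 1)) by lia. rewrite E_succ. unfold E_next.
  replace (Nat.eqb (S (2 * n + 1)) 1) with false by (symmetry; apply Nat.eqb_neq; lia).
  replace (S (2 * n + 1)) with (2 * (n + 1))%nat by lia.
  rewrite Nat.even_mul, mult_INR. cbn [Nat.even orb]. simpl (INR 2).
  do 3 f_equal. field.
Qed.

Lemma E_odd_succ (A x : R) (n : nat) :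
  E A (2 * n + 3) x = E A (2 * n + 1) x * exp ((1 - x * E A (2 * n + 2) x) * A).
Proof.
  replace (2 * n + 3)%nat with (2 * (n + 1) + 1)%nat by lia.
  rewrite !E_odd, <- exp_plus.
  replace (2 * (n + 1))%nat with (S (S (2 * n))) by lia.
  rewrite !sum_idx_E_list_succ.
  replace (Nat.even (S (2 * n))) with false
    by (rewrite Nat.even_succ, Nat.odd_mul; reflexivity).
  replace (Nat.even (S (S (2 * n)))) with true
    by (rewrite Nat.even_succ_succ, Nat.even_mul; reflexivity).
  replace (S (S (2 * n))) with (2 * n + 2)%nat by lia.
  f_equal. rewrite !plus_INR. simpl (INR 1). ring.
Qed.

Lemma E_even_succ (A x : R) (n : nat) :
  E A (2 * n + 4) x = E A (2 * n + 2) x * exp ((x * E A (2 * n + 3) x - 1) * A).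
Proof.
  replace (2 * n + 4)%nat with (2 * (n + 1) + 2)%nat by lia.
  rewrite !E_even, <- exp_plus.
  replace (2 * (n + 1) + 1)%nat with (S (S (2 * n + 1))) by lia.
  rewrite !sum_idx_E_list_succ.
  replace (Nat.odd (S (2 * n + 1))) with false
    by (rewrite <- Nat.add_succ_r, <- Nat.mul_succ_r, Nat.odd_mul; reflexivity).
  replace (Nat.odd (S (S (2 * n + 1)))) with true
    by (rewrite Nat.odd_succ_succ, Nat.add_1_r, Nat.odd_succ, Nat.even_mul; reflexivity).
  replace (S (S (2 * n + 1))) with (2 * n + 3)%nat by lia.
  f_equal. rewrite !plus_INR. simpl (INR 1). ring.
Qed.

Lemma iter_lv_period_map_diag (A x : R) (n : nat) :
  Nat.iter (S n) (lv_period_map A) (x, x) = (x * E A (2 * n + 1) x, x * E A (2 * n + 2) x).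
Proof.
  induction n as [|n IH].
  - rewrite (E_even A x 0). unfold lv_period_map, sum_idx. simpl.
    change (E_next A x [1] 1) with (E A 1 x). change (E A 1 x) with (exp ((1 - x) * A)).
    do 4 f_equal. ring.
  - change (Nat.iter (S (S n)) (lv_period_map A) (x, x))
      with (lv_period_map A (Nat.iter (S n) (lv_period_map A) (x, x))).
    rewrite IH. unfold lv_period_map. cbn [fst snd].
    replace (2 * S n + 1)%nat with (2 * n + 3)%nat by lia.
    replace (2 * S n + 2)%nat with (2 * n + 4)%nat by lia.
    rewrite E_even_succ, E_odd_succ, <- !Rmult_assoc. reflexivity.
Qed.

Theorem proposition3p2 (T : R) (alpha beta : R -> R) (A : R) :
  0 < T ->
  (forall t, continuous alpha t) -> (forall t, continuous beta t) ->
  (forall t, alpha (t + T) = alpha t) -> (forall t, beta (t + T) = beta t) ->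
  (forall t, T / 2 <= t <= T -> alpha t = 0) ->
  (forall t, 0 <= t <= T / 2 -> beta t = 0) ->
  (forall t, 0 < t < T / 2 -> 0 < alpha t) ->
  (forall t, T / 2 < t < T -> 0 < beta t) ->
  RInt alpha 0 T = A -> RInt beta 0 T = A -> 0 < A ->
  forall (n : nat) (x : R), (1 <= n)%nat -> 0 < x ->
    (exists u v, is_LV_solution alpha beta x x u v) /\
    (forall u v, is_LV_solution alpha beta x x u v ->
       u (INR n * T) = x * E A (2 * n - 1) x /\
       v (INR n * T) = x * E A (2 * n) x).
Proof.
  intros HT Hca Hcb Hpa Hpb Hza Hzb _ _ HA HB _ n x Hn _.
  split; [apply (LV_solution_exists T A alpha beta); auto|].
  intros u v (Hu0 & Hv0 & Du & Dv).
  destruct n as [|m]; [lia|].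
  replace (2 * S m - 1)%nat with (2 * m + 1)%nat by lia.
  replace (2 * S m)%nat with (2 * m + 2)%nat by lia.
  assert (Hiter :=
    LV_solution_iter T A alpha beta HT Hca Hcb Hpa Hpb Hza Hzb HA HB u v Du Dv (S m)).
  rewrite Hu0, Hv0, iter_lv_period_map_diag in Hiter.
  injection Hiter. auto.
Qed.
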